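(* Let $P$ be a CSP instance. The procedure EnumSolutions, applied to $P$, returns exactly $\mathsf{sol}(P)$.
   Context: Each variable $v$ has a domain $D(v)$; an assignment of a set of variables $W$ is a map $\theta$ with $\theta(v)\in D(v)$ for $v\in W$; $\theta|_X$ denotes restriction, and the assignment of the empty set of variables is $\bot$. A global constraint $e[\delta]$ consists of a polynomial-time algorithm $e$ together with a description $\delta$ specifying a scope $\mathcal V(\delta)$; it maps assignments of $\mathcal V(\delta)$ to $\{0,1\}$, and $\theta\in e[\delta]$ means $e[\delta](\theta)=1$. A CSP instance is $\langle V,C\rangle$ with $V$ a finite set of variables and $C$ a set of global constraints with scopes contained in $V$; a solution is an assignment $\theta$ of $V$ with $\theta|_{\mathcal V(\delta)}\in e[\delta]$ for all $e[\delta]\in C$, and $\mathsf{sol}(P)$ is the set of solutions. For $X\subseteq\mathcal V(\delta)$, $\mathsf{pj}_X(e[\delta])$ is the constraint on $X$ satisfied by $\mu$ iff some $\theta\in e[\delta]$ has $\theta|_X=\mu$; for $X\subseteq V$, $\mathsf{pj}_X(P)=\langle X,C'\rangle$ where $C'$ is the least set containing $\mathsf{pj}_{X\cap\mathcal V(\delta)}(e[\delta])$ for every $e[\delta]\in C$ with $X\cap\mathcal V(\delta)\ne\emptyset$. The procedure EnumSolutions$(P)$ for $P=\langle V,C\rangle$: if $V=\emptyset$, return $\{\bot\}$; otherwise pick some variable $w\in V$, recursively compute $\Theta=$ EnumSolutions$(\mathsf{pj}_{V\setminus\{w\}}(P))$, and return the set of all assignments $\theta\cup\{w\mapsto a\}$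 with $\theta\in\Theta$ and $a\in D(w)$ that are solutions of $P$. *)

From HB Require Import structures.
From mathcomp Require Import all_boot.
From mathcomp Require Import finmap.

Set Implicit Arguments.
Unset Strict Implicit.
Unset Printing Implicit Defensive.

Local Open Scope fset_scope.

(* CSP instances with global constraints, projections, and the procedure
   EnumSolutions (as a relation: any choice of the variable w is allowed
   at every recursive call). *)

Section CSP.

Variable var : choiceType.
Variable D : var -> Type.

Definition assignment := forall v : var, option (D v).

Definition is_assign (W : {fset var}) (theta : assignment) : Prop :=
  forall v, isSome (theta v) = (v \in W).

Definition bot : assignment := fun _ => None.

Definition restr (X : {fset var}) (theta : assignment) : assignment :=
  fun v => if v \in X then theta v else None.

(* theta \cup {w |-> a} *)
Definition ext (theta : assignment) (w : var) (a : D w) : assignment :=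
  fun v => if @eqP var w v is ReflectT e then Some (eq_rect w D a v e)
           else theta v.

(* A global constraint e[delta]: its scope V(delta) and its acceptance
   predicate (meaningful on assignments of the scope). *)
Record gconstr := GConstr {
  scope : {fset var};
  accepts : assignment -> Prop
}.

Definition pj_constr (X : {fset var}) (c : gconstr) : gconstr :=
  GConstr X (fun mu => exists theta, is_assign (scope c) theta /\
                                     accepts c theta /\ restr X theta = mu).

Record csp := CSP {
  csp_vars : {fset var};
  csp_cons : gconstr -> Prop
}.

Definition well_formed (P : csp) : Prop :=
  forall c, csp_cons P c -> scope c `<=` csp_vars P.

Definition is_solution (P : csp) (theta : assignment) : Prop :=
  is_assign (csp_vars P) theta /\
  forall c, csp_cons P c -> accepts c (restr (scope c) theta).

Definition pj_csp (X : {fset var}) (P : csp) : csp :=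
  CSP X (fun c' => exists2 c, csp_cons P c &
                   X `&` scope c != fset0 /\ c' = pj_constr (X `&` scope c) c).

Inductive enum_solutions : csp -> (assignment -> Prop) -> Prop :=
| enum_empty P :
    csp_vars P = fset0 -> enum_solutions P (fun theta => theta = bot)
| enum_step P w Theta :
    w \in csp_vars P ->
    enum_solutions (pj_csp (csp_vars P `\ w) P) Theta ->
    enum_solutions P (fun theta' => exists theta (a : D w),
        Theta theta /\ theta' = ext theta a /\ is_solution P theta').

End CSP.

From mathcomp Require Import all_boot.
From mathcomp Require Import finmap.
From Stdlib Require Import FunctionalExtensionality.

Set Implicit Arguments.
Unset Strict Implicit.

(* A solution of P restricts to a
   solution of every projection of P, and a solution of P is recovered from
   its restriction to V \ {w} by re-adding its value at w; so the candidates
   theta \cup {w |-> a} built from the solutions of pj_{V \ w}(P) include all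
   solutions of P, and the final filter keeps exactly those.  Projections
   only keep constraints meeting the projected scope, so no constraint of
   empty scope ever appears; this is what makes {bot} the right answer when
   no variables are left. *)

Local Open Scope fset_scope.

Section EnumSolutions.

Variable var : choiceType.
Variable D : var -> Type.

Implicit Types (W X : {fset var}) (theta : assignment D) (P : csp D).

Lemma assign_fset0 theta : is_assign fset0 theta -> theta = bot D.
Proof.
move=> Htheta; apply: functional_extensionality_dep => v.
by have := Htheta v; rewrite inE; case: (theta v).
Qed.

Lemma is_assign_restr W X theta :
  X `<=` W -> is_assign W theta -> is_assign X (restr X theta).
Proof.
move=> sXW Htheta v; rewrite /restr; case: ifP => // Xv.
by rewrite Htheta (fsubsetP sXW).
Qed.

Lemma restr_restr_sub X W theta :
  X `<=` W -> restr X (restr W theta) = restr X theta.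
Proof.
move=> sXW; apply: functional_extensionality_dep => v; rewrite /restr.
by case: ifP => // Xv; rewrite (fsubsetP sXW).
Qed.

Lemma ext_restr_fsetD1 W theta w a :
  is_assign W theta -> theta w = Some a ->
  ext (restr (W `\ w) theta) a = theta.
Proof.
move=> Htheta thetaw; apply: functional_extensionality_dep => v.
rewrite /ext /restr; case: eqP => [e | /eqP nwv]; first by case: v / e.
rewrite !inE eq_sym nwv /=; case: ifP => // /negbT Wv.
by have := Htheta v; rewrite (negbTE Wv); case: (theta v).
Qed.

Lemma well_formed_pj X P : well_formed (pj_csp X P).
Proof. by move=> c' [c _ [_ ->]]; apply: fsubsetIl. Qed.

Lemma pj_csp_scope_neq0 X P c :
  csp_cons (pj_csp X P) c -> scope c != fset0.
Proof. by move=> [c0 _ [+ ->]]. Qed.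

Lemma is_solution_pj X P theta :
  well_formed P -> X `<=` csp_vars P -> is_solution P theta ->
  is_solution (pj_csp X P) (restr X theta).
Proof.
move=> wfP sXV [Htheta Hacc]; split; first exact: is_assign_restr Htheta.
move=> _ [c Pc [_ ->]] /=.
exists (restr (scope c) theta); split; last split.
- exact: is_assign_restr (wfP c Pc) Htheta.
- exact: Hacc.
- by rewrite !restr_restr_sub ?fsubsetIl ?fsubsetIr.
Qed.

Lemma is_solution_fset0 P theta :
  well_formed P -> (forall c, csp_cons P c -> scope c != fset0) ->
  csp_vars P = fset0 -> is_solution P theta <-> theta = bot D.
Proof.
move=> wfP scopeP V0; split=> [[Htheta _] | ->].
  by apply: assign_fset0; rewrite -V0.
split=> [v | c Pc]; first by rewrite V0 inE.
have := wfP c Pc; rewrite V0 fsubset0 => /eqP c0.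
by have := scopeP c Pc; rewrite c0 eqxx.
Qed.

Lemma is_solution_ext_restr P w theta :
  w \in csp_vars P -> is_solution P theta ->
  exists a : D w, ext (restr (csp_vars P `\ w) theta) a = theta.
Proof.
move=> Vw [Htheta _]; have := Htheta w; rewrite Vw.
case thetaw: (theta w) => [a|] // _.
by exists a; apply: ext_restr_fsetD1.
Qed.

End EnumSolutions.

Theorem theorem4 (var : choiceType) (D : var -> Type) (P : csp D) :
  well_formed P ->
  (forall c, csp_cons P c -> scope c != fset0) ->
  forall Theta, enum_solutions P Theta ->
  forall theta, Theta theta <-> is_solution P theta.
Proof.
move=> + + Theta enumP; elim: enumP => {P Theta} [P V0 | P w Theta Vw _ IH] wfP scopeP.
  by move=> theta; rewrite is_solution_fset0.
have {}IH := IH (well_formed_pj (P := P)) (pj_csp_scope_neq0 (P := P)).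
move=> theta; split=> [[? [? [_ [_ ?]]]] // | solP].
have [a theta_ext] := is_solution_ext_restr Vw solP.
exists (restr (csp_vars P `\ w) theta), a; split=> //.
by apply/IH/is_solution_pj => //; apply: fsubsetDl.
Qed.
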